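(* Let $\varrho$ be a state on $\mathcal H_A\otimes\mathcal H_B\otimes\mathcal H_C$ with $\mathcal H_A=\mathcal H_B$, and let $F_{AB}$ be the flip operator exchanging $A$ and $B$. If $F_{AB}\,\mathrm{Tr}_C(\varrho)=\pm\mathrm{Tr}_C(\varrho)$, then $(F_{AB}\otimes\mathbb 1_C)\varrho=\pm\varrho$ (with the same sign).
   Context: $F_{AB}=\sum_{i,j}|ij\rangle\langle ji|$ on $\mathcal H_A\otimes\mathcal H_B$ (finite-dimensional Hilbert spaces). *)

From HB Require Import structures.
From mathcomp Require Import all_boot all_order all_algebra.
Set Implicit Arguments. Unset Strict Implicit. Unset Printing Implicit Defensive.
Import Order.TTheory GRing.Theory Num.Theory.
Local Open Scope ring_scope.

(* Operators on a finite-dimensional Hilbert space C^T with orthonormal basis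
   indexed by a finite type T, given by their matrix entries <x|X|y> = X x y. *)
Definition op (C : numClosedFieldType) (T : finType) := T -> T -> C.

Definition psd (C : numClosedFieldType) (T : finType) (X : op C T) : Prop :=
  forall v : T -> C, 0 <= \sum_(x : T) \sum_(y : T) (v x)^* * X x y * v y.

Definition trace (C : numClosedFieldType) (T : finType) (X : op C T) : C :=
  \sum_(x : T) X x x.

Definition is_state (C : numClosedFieldType) (T : finType) (X : op C T) : Prop :=
  psd X /\ trace X = 1.

(* H_A (x) H_B (x) H_C with H_A = H_B = C^n, H_C = C^m; basis |a,b,c> *)
Notation ABC n m := (prod (prod 'I_n 'I_n) 'I_m).
Notation AB n := (prod 'I_n 'I_n).

Definition ptraceC (C : numClosedFieldType) (n m : nat) (rho : op C (ABC n m))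
  : op C (AB n) :=
  fun x y => \sum_(c : 'I_m) rho (x, c) (y, c).

Definition flipAB (C : numClosedFieldType) (n : nat) : op C (AB n) :=
  fun x y => (x == (y.2, y.1))%:R.

Definition opmul (C : numClosedFieldType) (T : finType) (X Y : op C T) : op C T :=
  fun x y => \sum_(z : T) X x z * Y z y.

Definition flipAB_idC (C : numClosedFieldType) (n m : nat) : op C (ABC n m) :=
  fun x y => (@flipAB C n x.1 y.1) * (x.2 == y.2)%:R.

(* Write sigma for the exchange of the A and B labels of a basis vector and,
   for each basis vector x, put v_x = |sigma x> - eps |x>.  Summing
   <v_x|rho|v_x> over the C label of x gives the same expression for Tr_C rho,
   which vanishes because F_AB Tr_C rho = eps Tr_C rho; being nonnegative,
   every <v_x|rho|v_x> vanishes.  A positive semidefinite operator kills the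
   vectors of zero norm, so <v_x| rho = 0, i.e. rho (sigma x) y = eps rho x y,
   which is the claim. *)

From HB Require Import structures.
From mathcomp Require Import all_boot all_order all_algebra.
From mathcomp Require Import ring.
From Stdlib Require Import FunctionalExtensionality.

Set Implicit Arguments.
Unset Strict Implicit.
Unset Printing Implicit Defensive.
Import Order.TTheory GRing.Theory Num.Theory.
Local Open Scope ring_scope.

Section SesquilinearBound.
Variable C : numClosedFieldType.

Lemma ge0_sesquilinear_conj (a b c : C) : c^* = c ->
  (forall t : C, 0 <= t * a + t^* * b + t^* * t * c) -> b = a^*.
Proof.
move=> cR ge0.
have sum_real : a^* + b^* = a + b.
  have := geC0_conj (ge0 1); rewrite conjC1 !mul1r !rmorphD /= cR.
  exact: addIr.
have diff_imag : b^* - a^* = a - b.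
  have := geC0_conj (ge0 'i).
  rewrite !rmorphD !rmorphM /= conjCi raddfN /= conjCi opprK cR mulrN !mulNr.
  move=> /addIr e; apply: (mulfI (neq0Ci C)).
  by rewrite mulrBr addrC e; ring.
have twice : (b^* - a) *+ 2 = 0.
  transitivity ((a^* + b^*) - (a + b) + ((b^* - a^*) - (a - b))); first ring.
  by rewrite sum_real diff_imag !subrr addr0.
move/eqP: twice; rewrite mulrn_eq0 /= subr_eq0 => /eqP <-.
by rewrite conjCK.
Qed.

Lemma ge0_sesquilinear_eq0 (a b c : C) : 0 <= c ->
  (forall t : C, 0 <= t * a + t^* * b + t^* * t * c) -> a = 0.
Proof.
move=> c_ge0 ge0.
have bE := ge0_sesquilinear_conj (geC0_conj c_ge0) ge0; rewrite {}bE in ge0.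
set s := (1 + c)^-1.
have s_gt0 : 0 < s by rewrite invr_gt0 ltr_wpDr.
have sc : s * c = 1 - s.
  have s1 : s * (1 + c) = 1 by rewrite mulVf // gt_eqF // ltr_wpDr.
  by rewrite -s1 mulrDr mulr1 addrC addKr.
(* the witness [t = - a^* / (1 + c)] makes the expression negative unless [a = 0] *)
have := ge0 (- (s * a^*)).
rewrite rmorphN rmorphM /= conjCK (geC0_conj (ltW s_gt0)).
have -> : - (s * a^*) * a + - (s * a) * a^* + - (s * a) * - (s * a^*) * c
   = (`|a| ^+ 2 * s) * (s * c - 2) by rewrite normCK; ring.
rewrite sc nmulr_lge0; last by rewrite subr_lt0 ltrBlDr ltr_wpDr ?ltW ?ltr1n.
rewrite pmulr_lle0 // => a2_le0.
by apply/eqP; rewrite -normr_eq0 -sqrf_eq0 eq_le a2_le0 exprn_ge0.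
Qed.
End SesquilinearBound.

Section Forms.
Variables (C : numClosedFieldType) (T : finType).
Implicit Types (X : op C T) (u v w : T -> C).

Definition opform X u w := \sum_x \sum_y (u x)^* * X x y * w y.

Definition delta (p : T) : T -> C := fun z => (z == p)%:R.

Lemma opform_shift X v w t :
  opform X (fun z => v z + t * w z) (fun z => v z + t * w z) =
  opform X v v + t * opform X v w + t^* * opform X w v + t^* * t * opform X w w.
Proof.
rewrite /opform !mulr_sumr -!big_split /=; apply: eq_bigr => x _.
rewrite !mulr_sumr -!big_split /=; apply: eq_bigr => y _.
rewrite rmorphD rmorphM /=; ring.
Qed.

Lemma psd_opform_eq0 X v : psd X -> opform X v v = 0 -> forall w, opform X v w = 0.
Proof.
move=> X_psd v_null w.
apply: (ge0_sesquilinear_eq0 (b := opform X w v) (c := opform X w w) (X_psd w)).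
move=> t; have := X_psd (fun z => v z + t * w z).
by rewrite -/(opform _ _ _) opform_shift v_null add0r.
Qed.

Lemma sum_mul_delta (F : T -> C) p : \sum_y F y * delta p y = F p.
Proof.
rewrite (bigD1 p) //= big1 ?addr0 /delta ?eqxx ?mulr1 // => y /negbTE ->.
exact: mulr0.
Qed.

Lemma sum_delta_mul (F : T -> C) p : \sum_y delta p y * F y = F p.
Proof. by under eq_bigr do rewrite mulrC; rewrite sum_mul_delta. Qed.

Lemma sum_mul_delta_comb (F : T -> C) p q e :
  \sum_y F y * (delta p y - e * delta q y) = F p - e * F q.
Proof.
under eq_bigr do rewrite mulrBr mulrCA.
by rewrite sumrB sum_mul_delta -mulr_sumr sum_mul_delta.
Qed.

Lemma conj_delta p z : (delta p z)^* = delta p z.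
Proof. exact: conjC_nat. Qed.

Lemma opform_delta_comb X p q e w : e^* = e ->
  opform X (fun z => delta p z - e * delta q z) w =
  \sum_y (X p y - e * X q y) * w y.
Proof.
move=> e_real; rewrite /opform exchange_big /=; apply: eq_bigr => y _.
rewrite -mulr_suml; congr (_ * _).
under eq_bigr do rewrite rmorphB rmorphM /= !conj_delta e_real mulrC.
exact: sum_mul_delta_comb.
Qed.
End Forms.

Arguments delta {C T} p z.

Section FlipSymmetry.
Variables (C : numClosedFieldType) (n m : nat).

Definition swapAB (p : AB n) : AB n := (p.2, p.1).

Definition swapAB_idC (x : ABC n m) : ABC n m := (swapAB x.1, x.2).

Lemma eq_swapAB p q : (p == swapAB q) = (q == swapAB p).
Proof.
by case: p q => [a b] [a' b']; rewrite !xpair_eqE andbC (eq_sym a) (eq_sym b).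
Qed.

Lemma flipAB_mulE (X : op C (AB n)) p y :
  opmul (@flipAB C n) X p y = X (swapAB p) y.
Proof.
rewrite -(sum_delta_mul (X^~ y)); apply: eq_bigr => q _.
by rewrite /flipAB -/(swapAB q) eq_swapAB.
Qed.

Lemma flipAB_idC_mulE (X : op C (ABC n m)) x y :
  opmul (@flipAB_idC C n m) X x y = X (swapAB_idC x) y.
Proof.
rewrite -(sum_delta_mul (X^~ y)); apply: eq_bigr => z _.
rewrite /flipAB_idC /flipAB -/(swapAB z.1) eq_swapAB -natrM mulnb.
by case: x z => [p c] [q c']; rewrite /delta xpair_eqE (eq_sym c).
Qed.

Variables (rho : op C (ABC n m)) (eps : C).
Hypotheses (rho_psd : psd rho) (eps_real : eps^* = eps).
Hypothesis ptrace_flip :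
  forall p y, ptraceC rho (swapAB p) y = eps * ptraceC rho p y.

Definition flip_defect x : ABC n m -> C :=
  fun z => delta (swapAB_idC x) z - eps * delta x z.

Lemma opform_flip_defect x : opform rho (flip_defect x) (flip_defect x) =
  rho (swapAB_idC x) (swapAB_idC x) - eps * rho x (swapAB_idC x)
  - eps * (rho (swapAB_idC x) x - eps * rho x x).
Proof. by rewrite /flip_defect opform_delta_comb // sum_mul_delta_comb. Qed.

Lemma sum_opform_flip_defect p :
  \sum_c opform rho (flip_defect (p, c)) (flip_defect (p, c)) = 0.
Proof.
under eq_bigr do rewrite opform_flip_defect.
rewrite !sumrB -!mulr_sumr !sumrB -!mulr_sumr.
have := ptrace_flip p (swapAB p); have := ptrace_flip p p; rewrite /ptraceC => -> ->.
by rewrite /swapAB_idC /= !subrr mulr0 subr0.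
Qed.

Lemma opform_flip_defect_eq0 x : opform rho (flip_defect x) (flip_defect x) = 0.
Proof.
case: x => p c; apply: (psumr_eq0P _ (sum_opform_flip_defect p)) => // c' _.
exact: rho_psd.
Qed.

Lemma rho_flip x y : rho (swapAB_idC x) y = eps * rho x y.
Proof.
apply/eqP; rewrite -subr_eq0; apply/eqP.
have := psd_opform_eq0 rho_psd (opform_flip_defect_eq0 x) (delta y).
by rewrite /flip_defect opform_delta_comb // sum_mul_delta.
Qed.
End FlipSymmetry.

Theorem mainTheorem5 (C : numClosedFieldType) (n m : nat)
  (rho : op C (ABC n m)) (eps : C) :
  is_state rho ->
  (eps = 1 \/ eps = -1) ->
  opmul (@flipAB C n) (ptraceC rho) = (fun x y => eps * ptraceC rho x y) ->
  opmul (@flipAB_idC C n m) rho = (fun x y => eps * rho x y).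
Proof.
move=> [rho_psd _] eps_pm flip_ptrace.
have eps_real : eps^* = eps by case: eps_pm => ->; rewrite ?conjC1 ?conjCN1.
have ptrace_flip p y : ptraceC rho (swapAB p) y = eps * ptraceC rho p y.
  by rewrite -flipAB_mulE flip_ptrace.
apply: functional_extensionality => x; apply: functional_extensionality => y.
by rewrite flipAB_idC_mulE (rho_flip rho_psd eps_real ptrace_flip).
Qed.
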